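(* Let $y\in W^{1,1}_{\mathrm{loc}}([0,\infty);\mathbb{R})$ with $y\ge0$ on $[0,\infty)$, $\delta\in(0,1)$, $\alpha>0$, $T_0>0$, and set $$y_\star=\big(\alpha\,\delta^\delta(1-\delta)\big)^{\frac1{1-\delta}},\qquad x_\star=\big(\alpha\,\delta(1-\delta)T_0\big)^{\frac1{1-\delta}}.$$ If $y(0)\le x_\star$ and if for almost every $t>0$, $$y'(t)+\alpha y(t)^\delta\le y_\star(T_0-t)_+^{\frac{\delta}{1-\delta}},$$ then $y(t)=0$ for every $t\ge T_0$.
   Context: $x_+=\max\{x,0\}$. *)

From HB Require Import structures.
From mathcomp Require Import all_boot all_order all_algebra.
From mathcomp Require Import all_classical all_reals all_analysis.
Set Implicit Arguments. Unset Strict Implicit. Unset Printing Implicit Defensive.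
Import Order.TTheory GRing.Theory Num.Theory.
Local Open Scope classical_set_scope.
Local Open Scope ring_scope.

(* [W11loc_with_deriv y g]: y belongs to W^{1,1}_loc([0,oo)) (continuous
   representative) and g is (a representative of) its weak derivative y':
   g is Lebesgue integrable on every [0,T] and y(t) = y(0) + \int_0^t g
   for every t >= 0. *)
Definition W11loc_with_deriv (R : realType) (y g : R -> R) : Prop :=
  (forall T : R, 0 < T ->
     (lebesgue_measure : set R -> \bar R).-integrable `[0, T] (EFin \o g)) /\
  (forall t : R, 0 <= t ->
     (y t)%:E = ((y 0)%:E + \int[lebesgue_measure]_(s in `[0%R, t]) (g s)%:E)%E).

Definition pos_part (R : realType) (x : R) : R := Num.max x 0.

From HB Require Import structures.
From mathcomp Require Import all_boot all_order all_algebra.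
From mathcomp Require Import all_classical all_reals all_analysis.
From mathcomp Require Import ring lra measurable_realfun.
Import Order.TTheory GRing.Theory Num.Theory numFieldNormedType.Exports.
Local Open Scope classical_set_scope.
Local Open Scope ring_scope.

(* The function psi(t) = c (T0 - t)_+^(1/(1-delta)), with c chosen so that
   psi(0) = x_star, solves
     psi' + alpha psi^delta = y_star (T0 - t)_+^(delta/(1-delta))
   exactly.  Where y > psi the differential inequality therefore gives
   (y - psi)' <= alpha (psi^delta - y^delta) <= 0, and an absolutely continuous
   function that can only decrease while it is positive stays nonpositive:
   y <= psi on [0, T0], so y(T0) = 0.  Beyond T0 the right-hand side vanishes,
   y' <= 0 almost everywhere, and y stays at 0. *)

Section primitive.
Context {R : realType}.
Local Notation mu := (@lebesgue_measure R).

(* [lebesgue_measure : set R -> \bar R] lives on the measurable structure that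
   [R] carries canonically, whereas the integration library works over
   [measurableTypeR R]: same measurable sets, different types, so integrability
   has to be transported along the identity. *)
Lemma integrable_measurableTypeR (D : set R) (f : R -> R) : measurable D ->
  (lebesgue_measure : set R -> \bar R).-integrable D (EFin \o f) ->
  mu.-integrable D (EFin \o f).
Proof.
move=> mD /integrableP[mf fint]; apply/integrableP; split.
  by move=> mD' B mB; exact: (mf mD' B mB).
pose idR := fun x : measurableTypeR R => (x : R).
have mid : measurable_fun setT idR by move=> _ B mB; rewrite setTI.
have mfD : measurable_fun (T:=measurableTypeR R) D (fun x => (f x)%:E).
  by move=> mD' B mB; exact: (mf mD' B mB).
have mabsf : measurable_fun (T:=measurableTypeR R) D
    (abse \o (fun x => (f x)%:E)).
  exact: measurableT_comp.
have fint' : (\int[pushforward mu idR]_(x in D) `|(EFin \o f) x| < +oo)%E.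
  exact: fint.
by rewrite ge0_integral_pushforward // in fint'.
Qed.

Lemma ae_measurableTypeR (P : set R) :
  almost_everywhere (lebesgue_measure : set R -> \bar R) P ->
  almost_everywhere mu P.
Proof. by case=> N [mN N0 PN]; exists N. Qed.

Lemma lebesgue_aeS {P Q : set R} :
  {ae mu, forall x, P x} -> P `<=` Q -> {ae mu, forall x, Q x}.
Proof.
(* the [Filter] instance of [almost_everywhere mu] is not found by inference *)
move=> aeP PQ.
exact: (@filterS _ _ (ae_filter_ringOfSetsType mu) _ _ PQ aeP).
Qed.

Lemma Rintegral_le0_ae (D : set R) (f : R -> R) : measurable D ->
  mu.-integrable D (EFin \o f) -> {ae mu, forall x, D x -> f x <= 0} ->
  \int[mu]_(x in D) f x <= 0.
Proof.
move=> mD intf [N [mN N0 fN]].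
rewrite /Rintegral (negligible_integral mN mD intf N0); apply: fine_le0.
rewrite -[leRHS](integral0 mu (D `\` N)).
apply: (@le_integral _ _ _ mu _ (measurableD mD mN)).
- by apply: integrableS intf => //; exact: measurableD.
- exact: integrable0.
move=> x /set_mem[Dx Nx]; rewrite /= lee_fin leNgt; apply/negP => fx.
by apply: Nx; apply: fN => /(_ Dx); rewrite leNgt fx.
Qed.

Definition primitive_on (a b : R) (w h : R -> R) :=
  mu.-integrable `[a, b] (EFin \o h) /\
  forall v, a <= v <= b -> w v = w a + \int[mu]_(x in `[a, v]) h x.

Lemma primitive_onB {a b : R} {w1 w2 h1 h2 : R -> R} :
  primitive_on a b w1 h1 -> primitive_on a b w2 h2 ->
  primitive_on a b (w1 \- w2) (h1 \- h2).
Proof.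
move=> [i1 e1] [i2 e2]; split; first exact: (integrableB _ i1 i2).
move=> v /[dup] vab /andP[_ vb].
have sub : `[a, v] `<=` `[a, b] by apply: subset_itvl; rewrite bnd_simp.
rewrite /= (e1 v vab) (e2 v vab) RintegralB //; first ring.
- exact: integrableS i1.
- exact: integrableS i2.
Qed.

Lemma primitive_onS {a s b : R} {w h : R -> R} : a <= s <= b ->
  primitive_on a b w h -> primitive_on s b w h.
Proof.
move=> /andP[a_s sb] [ih wh]; split=> [|v /andP[sv vb]].
  by apply: integrableS ih => //; apply: subset_itvr; rewrite bnd_simp.
have av : a <= v := le_trans a_s sv.
have iv : mu.-integrable `[a, v] (EFin \o h).
  by apply: integrableS ih => //; apply: subset_itvl; rewrite bnd_simp.
rewrite (wh v) ?av ?vb // (wh s) ?a_s ?sb //.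
have := @Rintegral_itvB R h (BLeft a) (BRight v) s iv.
rewrite !bnd_simp => /(_ a_s sv); rewrite Rintegral_itv_obnd_cbnd; last first.
  by apply: integrableS iv => //; apply: subset_itvr; rewrite bnd_simp.
by move=> <-; ring.
Qed.

Lemma primitive_on_continuous {a b : R} {w h : R -> R} : a <= b ->
  primitive_on a b w h -> {within `[a, b], continuous w}.
Proof.
move=> ab [ih wh].
apply: (@subspace_eq_continuous _ _ _
  (fun v => w a + parameterized_integral mu a v h)).
  move=> v /set_mem; rewrite /= in_itv /= => vab.
  by rewrite /from_subspace (wh v vab).
move=> x; apply: cvgD; first exact: cvg_cst.
exact: (parameterized_integral_continuous ab ih).
Qed.

Lemma primitive_on_le {a b : R} {w h : R -> R} : a <= b ->
  primitive_on a b w h -> {ae mu, forall r, a < r <= b -> h r <= 0} ->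
  w b <= w a.
Proof.
move=> ab [ih wh] aeh.
have iab : mu.-integrable `]a, b] (EFin \o h).
  by apply: integrableS ih => //; apply: subset_itvr; rewrite bnd_simp.
rewrite (wh b) ?ab ?lexx // -Rintegral_itv_obnd_cbnd // gerDl.
by apply: Rintegral_le0_ae.
Qed.

Lemma last_nonpos_point {a b : R} {w : R -> R} : a <= b ->
  {within `[a, b], continuous w} -> w a <= 0 ->
  exists2 s, a <= s <= b /\ w s <= 0 & forall r, s < r <= b -> 0 < w r.
Proof.
move=> ab cw wa.
pose S := [set r | a <= r <= b /\ w r <= 0].
have Sa : S a by rewrite /S /= lexx ab.
have ubS : ubound S b by move=> r [/andP[_ ->]].
have supS : has_sup S by split; [exists a | exists b].
have a_s : a <= sup S by exact: sup_upper_bound.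
have sb : sup S <= b by apply: ge_sup => //; exists a.
exists (sup S); last first.
  move=> r /andP[sr rb]; rewrite ltNge; apply/negP => wr.
  have Sr : S r by split => //; rewrite rb (le_trans a_s (ltW sr)).
  by move: sr; rewrite ltNge sup_upper_bound.
split; first by rewrite a_s sb.
rewrite leNgt; apply/negP => ws.
have sab : `[a, b]%classic (sup S) by rewrite /= in_itv /= a_s sb.
have /subspace_continuousP /(_ _ sab) cws := cw.
have wpos : \forall r \near within `[a, b] (nbhs (sup S)), 0 < w r.
  exact: (cvgr_gt _ cws _ ws).
rewrite near_withinE in wpos.
have [r [[rab wr] /(_ rab)]] :=
  closure_sup (ex_intro _ a Sa) (ex_intro _ b ubS) wpos.
by rewrite ltNge wr.
Qed.

Lemma primitive_on_le0 {a b : R} {w h : R -> R} : a <= b ->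
  primitive_on a b w h ->
  {ae mu, forall r, a < r <= b -> 0 < w r -> h r <= 0} ->
  w a <= 0 -> w b <= 0.
Proof.
move=> ab wh aeh wa.
have [s [/andP[a_s sb] ws] wpos] :=
  last_nonpos_point ab (primitive_on_continuous ab wh) wa.
apply: le_trans ws; apply: (primitive_on_le sb).
  by apply: primitive_onS wh; rewrite a_s sb.
apply: (lebesgue_aeS aeh) => r hr /andP[sr rb].
by apply: hr; [rewrite (le_lt_trans a_s sr) rb | apply: wpos; rewrite sr rb].
Qed.

Lemma W11loc_primitive_on {y g : R -> R} {b : R} :
  W11loc_with_deriv y g -> 0 < b -> primitive_on 0 b y g.
Proof.
move=> [ig yg] b0; split.
  by apply: integrable_measurableTypeR (ig b b0); exact: measurable_itv.
move=> v /andP[v0 _]; move: (yg v v0); rewrite /Rintegral.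
by case: (\int[_]_(_ in _) _)%E => [r [->]||].
Qed.

End primitive.

Lemma continuous_pos_part_powR {R : realType} (q : R) : 0 < q ->
  continuous (fun x : R => pos_part x `^ q).
Proof.
rewrite /pos_part => q0 x.
have [x0|x0|->] := ltgtP x 0.
- apply/cvgrPdist_lt => e e0; near=> z.
  have zlt : z < 0 by near: z; exact: lt_nbhsl.
  by rewrite /= (max_r (ltW x0)) (max_r (ltW zlt)) subrr normr0.
- have cp : {for x, continuous (fun z : R => z `^ q)}.
    apply: (@differentiable_continuous _ R^o R^o x (fun z : R => z `^ q)).
    apply/derivable1_diffP.
    by apply: derivable_powR; rewrite in_itv /= andbT.
  apply/cvgrPdist_lt => e e0; near=> z.
  have zpos : 0 < z by near: z; exact: lt_nbhsr.
  rewrite /= (max_l (ltW x0)) (max_l (ltW zpos)).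
  near: z; move/cvgrPdist_lt: cp => /(_ e e0); exact.
- apply/cvgrPdist_lt => e e0.
  rewrite /= maxxx powR0 ?gt_eqF //.
  exists (e `^ q^-1) => /=; first by rewrite powR_gt0.
  move=> z; rewrite /ball_ /= sub0r normrN => hz.
  rewrite sub0r normrN ger0_norm ?powR_ge0 //.
  case: (leP z 0) => z0; first by rewrite powR0 ?gt_eqF.
  have := @gt0_ltr_powR _ q q0 z (e `^ q^-1).
  rewrite !nnegrE ltW // powR_ge0 -powRrM mulVf ?gt_eqF // powRr1 ?ltW //.
  by apply => //; rewrite -(gtr0_norm z0).
Unshelve. all: by end_near.
Qed.

Section barrier.
Context {R : realType}.

Definition barrier (c p T0 x : R) := c * pos_part (T0 - x) `^ p.

Lemma continuous_barrier (c p T0 : R) : 0 < p -> continuous (barrier c p T0).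
Proof.
move=> p0 x; apply: cvgM; first exact: cvg_cst.
apply: (@continuous_comp _ _ _ (fun z : R => T0 - z)
  (fun z => pos_part z `^ p)).
  by apply: cvgB; [exact: cvg_cst | exact: cvg_id].
exact: continuous_pos_part_powR.
Qed.

Lemma is_derive_barrier (c p T0 x : R) : x < T0 ->
  is_derive x 1 (barrier c p T0) (barrier (- (c * p)) (p - 1) T0 x).
Proof.
move=> xT; have Tx : 0 < T0 - x by rewrite subr_gt0.
have hT : is_derive x 1 (fun z : R => T0 - z) (-1).
  by apply: (@is_derive_eq _ R^o R^o _ x 1 _ (0 - 1)); rewrite sub0r.
have hpow : is_derive x 1 ((fun u : R => u `^ p) \o (fun z : R => T0 - z))
    (p * (T0 - x) `^ (p - 1) * -1).
  exact: (@is_derive1_comp _ (fun u : R => u `^ p) (fun z : R => T0 - z) x _ _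
    (is_derive1_powR p Tx) hT).
have hc := @is_deriveZ _ R^o R^o _ c x 1 _ hpow.
apply: (@is_derive_eq _ R^o R^o _ x 1 _ (c *: (p * (T0 - x) `^ (p - 1) * -1))).
  apply: (near_eq_is_derive _ hc); near=> z.
  have zT : z < T0 by near: z; exact: lt_nbhsl.
  by rewrite /barrier /pos_part /= max_l // subr_ge0 ltW.
by rewrite /barrier /pos_part (max_l (ltW Tx)) /GRing.scale /=; ring.
Unshelve. all: by end_near.
Qed.

Lemma primitive_on_barrier (c : R) {p a T0 : R} : 1 < p ->
  primitive_on a T0 (barrier c p T0) (barrier (- (c * p)) (p - 1) T0).
Proof.
move=> p1; have p0 : 0 < p := lt_trans ltr01 p1.
have p10 : 0 < p - 1 by rewrite subr_gt0.
split.
  apply: continuous_compact_integrable; first exact: segment_compact.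
  by apply: continuous_subspaceT; exact: continuous_barrier.
move=> v /andP[]; rewrite le_eqVlt => /predU1P[<- _|av vT].
  by rewrite set_itv1 Rintegral_set1 addr0.
rewrite /Rintegral (@continuous_FTC2 _ _ (barrier c p T0) a v av) /=.
  by ring.
- by apply: continuous_subspaceT; exact: continuous_barrier.
- split.
  + move=> x /[!in_itv] /= /andP[_ xv].
    by case: (is_derive_barrier c p T0 x (lt_le_trans xv vT)).
  + by apply: cvg_at_right_filter; exact: continuous_barrier.
  + by apply: cvg_at_left_filter; exact: continuous_barrier.
- move=> x /[!in_itv] /= /andP[_ xv].
  have := is_derive_barrier c p T0 x (lt_le_trans xv vT).
  by move=> dx; rewrite derive1E (@derive_val _ _ _ _ _ _ _ dx).
Qed.

End barrier.

Section extinction.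
Context {R : realType} {delta alpha T0 : R}.
Hypotheses (delta_gt0 : 0 < delta) (delta_lt1 : delta < 1).
Hypothesis alpha_gt0 : 0 < alpha.
Local Notation mu := (@lebesgue_measure R).

Let p := 1 / (1 - delta).
Let k := delta / (1 - delta).
Let A := alpha * delta * (1 - delta).
Let ystar := (alpha * delta `^ delta * (1 - delta)) `^ p.
Let psi := barrier (A `^ p) p T0.
Let dpsi := barrier (- (A `^ p * p)) (p - 1) T0.

Let one_sub_delta_gt0 : 0 < 1 - delta. Proof. by rewrite subr_gt0. Qed.
Let A_gt0 : 0 < A. Proof. by rewrite !mulr_gt0. Qed.
Let k_gt0 : 0 < k. Proof. exact: divr_gt0. Qed.
Let pE : p = 1 + k.
Proof. by rewrite /p /k; field; exact: lt0r_neq0. Qed.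
Let p_gt1 : 1 < p. Proof. by rewrite pE ltrDl. Qed.

Lemma barrier_ode x :
  dpsi x + alpha * psi x `^ delta = ystar * pos_part (T0 - x) `^ k.
Proof.
rewrite /dpsi /psi /barrier; set m := pos_part (T0 - x).
have powS z : 0 < z -> z `^ p = z * z `^ k.
  by move=> z0; rewrite pE powRD ?powRr1 ?(ltW z0) // (gt_eqF z0) implybT.
have pdelta : p * delta = k by rewrite /p /k mul1r mulrC.
have Ap : A * p = alpha * delta by rewrite /A /p; field; exact: lt0r_neq0.
have ystarE : ystar = alpha * (1 - delta) * A `^ k.
  rewrite /ystar /A !powRM ?mulr_ge0 ?powR_ge0 ?(ltW alpha_gt0) ?(ltW delta_gt0)
    ?(ltW one_sub_delta_gt0) //.
  by rewrite -powRrM (mulrC delta p) pdelta !powS //; ring.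
have pk : p - 1 = k by rewrite pE; ring.
rewrite powRM ?powR_ge0 // -!powRrM pdelta pk (powS A A_gt0) (mulrAC A) Ap.
by rewrite ystarE; ring.
Qed.

Lemma deriv_le_barrier {y g : R -> R} {r : R} :
  g r + alpha * y r `^ delta <= ystar * pos_part (T0 - r) `^ k ->
  psi r < y r -> g r <= dpsi r.
Proof.
rewrite -barrier_ode => ode psi_y.
have psi_ge0 : 0 <= psi r by rewrite /psi /barrier mulr_ge0 ?powR_ge0.
have : psi r `^ delta <= y r `^ delta.
  apply: ge0_ler_powR; rewrite ?nnegrE ?(ltW delta_gt0) ?(ltW psi_y) //.
  exact: le_trans psi_ge0 (ltW psi_y).
move/(ler_wpM2l (ltW alpha_gt0)); lra.
Qed.

Lemma deriv_le0_after_T0 {y g : R -> R} {r : R} : T0 < r ->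
  g r + alpha * y r `^ delta <= ystar * pos_part (T0 - r) `^ k -> g r <= 0.
Proof.
move=> T0r; rewrite /pos_part max_r ?subr_le0 ?(ltW T0r) //.
rewrite powR0 ?gt_eqF // mulr0.
by have := mulr_ge0 (ltW alpha_gt0) (powR_ge0 (y r) delta); lra.
Qed.

Lemma le0_at_T0 {y g : R -> R} : 0 < T0 -> primitive_on 0 T0 y g ->
  y 0 <= (A * T0) `^ p ->
  {ae mu, forall t, 0 < t <= T0 ->
    g t + alpha * y t `^ delta <= ystar * pos_part (T0 - t) `^ k} ->
  y T0 <= 0.
Proof.
move=> T0_gt0 yg y0 ode.
have psi_prim : primitive_on 0 T0 psi dpsi := primitive_on_barrier _ p_gt1.
suff : (y \- psi) T0 <= 0.
  rewrite /= /psi /barrier subrr /pos_part maxxx powR0 ?mulr0 ?subr0 //.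
  by rewrite gt_eqF // (lt_trans ltr01 p_gt1).
apply: (primitive_on_le0 (ltW T0_gt0) (primitive_onB yg psi_prim)).
  apply: (lebesgue_aeS ode) => r ode_r r0T /=; rewrite subr_gt0 subr_le0.
  exact: deriv_le_barrier (ode_r r0T).
rewrite /= subr_le0 /psi /barrier subr0 /pos_part (max_l (ltW T0_gt0)).
by rewrite -powRM ?(ltW A_gt0) ?(ltW T0_gt0).
Qed.

End extinction.

Theorem lemma5p2 (R : realType) (y g : R -> R) (delta alpha T0 : R) :
  W11loc_with_deriv y g ->
  (forall t, 0 <= t -> 0 <= y t) ->
  0 < delta -> delta < 1 -> 0 < alpha -> 0 < T0 ->
  let ystar := (alpha * delta `^ delta * (1 - delta)) `^ (1 / (1 - delta)) in
  let xstar := (alpha * delta * (1 - delta) * T0) `^ (1 / (1 - delta)) in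
  y 0 <= xstar ->
  {ae (lebesgue_measure : set R -> \bar R), forall t, 0 < t ->
     g t + alpha * y t `^ delta <=
       ystar * pos_part (T0 - t) `^ (delta / (1 - delta))} ->
  forall t, T0 <= t -> y t = 0.
Proof.
move=> yW y_ge0 d0 d1 a0 T0_gt0 ystar xstar y0 /ae_measurableTypeR ode t tT.
have t_gt0 : 0 < t := lt_le_trans T0_gt0 tT.
have yT0 : y T0 <= 0.
  apply: (le0_at_T0 d0 d1 a0 T0_gt0 (W11loc_primitive_on yW T0_gt0) y0).
  by apply: (lebesgue_aeS ode) => r ode_r /andP[r0 _]; exact: ode_r.
have yt : y t <= y T0.
  apply: (primitive_on_le tT).
    apply: primitive_onS (W11loc_primitive_on yW t_gt0).
    by rewrite (ltW T0_gt0) tT.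
  apply: (lebesgue_aeS ode) => r ode_r /andP[T0r _].
  apply: (deriv_le0_after_T0 (y := y) d0 d1 a0 T0r).
  exact: ode_r (lt_trans T0_gt0 T0r).
apply/eqP; rewrite eq_le (le_trans yt yT0) y_ge0 //.
exact: le_trans (ltW T0_gt0) tT.
Qed.
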